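(* Let $\theta$ be an ordered partial action of a groupoid $\mathcal{G}$ on a semilatticeoid $X$. Then the semidirect product $\mathcal{G}\ltimes_\theta X$ is an $E$-unitary inverse semigroupoid.
   Context: Inverse semigroupoid: arrows $\mathcal{S}$, objects $\mathcal{S}^{(0)}$, maps $d,c$, associative multiplication on $\mathcal{S}^{(2)}=\{(s,t):d(s)=c(t)\}$ with $d(st)=d(t)$, $c(st)=c(s)$, unique $s^*$ with $ss^*s=s$, $s^*ss^*=s^*$; natural order on parallel arrows $s\leqslant t$ iff $s=te$ for an idempotent $e$; $(s,t)\in\sigma$ iff some $r\leqslant s,t$; $E$-unitary: $(s,e)\in\sigma$, $e$ idempotent imply $s$ idempotent. A groupoid is an inverse semigroupoid with exactly one idempotent over each object. A semilatticeoid is an inverse semigroupoid all of whose elements are idempotent, with its natural order. A partial action of $\mathcal{G}$ on $X$ is a pair $(\{X_g\},\{\theta_g\})$, $X_g\subseteq X$, $\theta_g:X_{g^{*}}\to X_g$ bijections with $\theta_g^{-1}=\theta_{g^*}$, $X=\bigcup X_g$, $\theta_g\circ\theta_h\subseteq\theta_{gh}$ for composable $(g,h)$, $X_g\subseteq X_h$ if $g\leqslant h$; ordered if each $X_g$ is an order ideal and each $\theta_g$ an order isomorphism; assume $X_g\ne\emptyset$. Semidirect product: $\mathcal{G}\ltimes_\theta X=\{(g,x): x\in X_{g^*}\}$ with objects $\mathcal{G}^{(0)}\times X^{(0)}$, $d(g,x)=(d(g),d(x))$, $c(g,x)=(c(g),c(\theta_g(x)))$, product $(g,x)(h,y)=(gh,\theta_{h^*}(x\theta_h(y)))$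 defined when $(g,h)$ composable and $(x,\theta_h(y))\in X^{(2)}$. *)

From Stdlib Require Import ClassicalDescription.

(* Raw semigroupoid data: arrows, objects, domain/codomain maps and a
   multiplication.  The multiplication is a total function; only its values
   on composable pairs (d s = c t) are meaningful. *)
Record sgd := Sgd {
  arr : Type;
  obj : Type;
  dm  : arr -> obj;
  cd  : arr -> obj;
  mul : arr -> arr -> arr }.

Arguments dm {s}.
Arguments cd {s}.
Arguments mul {s}.

Section Basic.
Variable S : sgd.

Definition composable (s t : arr S) : Prop := dm s = cd t.

Definition semigroupoid : Prop :=
  (forall s t, composable s t -> dm (mul s t) = dm t /\ cd (mul s t) = cd s) /\
  (forall s t u, composable s t -> composable t u ->
     mul (mul s t) u = mul s (mul t u)).

Definition is_inverse (s t : arr S) : Prop :=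
  composable s t /\ composable t s /\
  mul (mul s t) s = s /\ mul (mul t s) t = t.

Definition inverse_semigroupoid : Prop :=
  semigroupoid /\ forall s, exists! t, is_inverse s t.

Definition idempotent (e : arr S) : Prop := composable e e /\ mul e e = e.

Definition nat_le (s t : arr S) : Prop :=
  dm s = dm t /\ cd s = cd t /\
  exists e, idempotent e /\ composable t e /\ s = mul t e.

Definition sigma_rel (s t : arr S) : Prop := exists r, nat_le r s /\ nat_le r t.

Definition E_unitary : Prop :=
  forall s e, sigma_rel s e -> idempotent e -> idempotent s.

Definition groupoid : Prop :=
  inverse_semigroupoid /\
  forall o : obj S, exists! e, idempotent e /\ dm e = o /\ cd e = o.

Definition semilatticeoid : Prop :=
  inverse_semigroupoid /\ forall x, idempotent x.
End Basic.

Section Action.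
Variables (G X : sgd).
(* ginv g = g^*  ;  Xd g x  means  x \in X_g  ;  th g = theta_g *)
Variables (ginv : arr G -> arr G) (Xd : arr G -> arr X -> Prop)
          (th : arr G -> arr X -> arr X).

Definition partial_action : Prop :=
  (forall g x, Xd (ginv g) x -> Xd g (th g x)) /\
  (forall g x y, Xd (ginv g) x -> Xd (ginv g) y -> th g x = th g y -> x = y) /\
  (forall g y, Xd g y -> exists x, Xd (ginv g) x /\ th g x = y) /\
  (forall g x, Xd (ginv g) x -> th (ginv g) (th g x) = x) /\
  (forall x, exists g, Xd g x) /\
  (forall g h, composable G g h -> forall x,
      Xd (ginv h) x -> Xd (ginv g) (th h x) ->
      Xd (ginv (mul g h)) x /\ th (mul g h) x = th g (th h x)) /\
  (forall g h, nat_le G g h -> forall x, Xd g x -> Xd h x) /\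
  (forall g, exists x, Xd g x).

Definition ordered_partial_action : Prop :=
  partial_action /\
  (forall g x y, nat_le X x y -> Xd g y -> Xd g x) /\
  (forall g x y, Xd (ginv g) x -> Xd (ginv g) y ->
      (nat_le X x y <-> nat_le X (th g x) (th g y))).

Definition sdp_arr : Type := { p : arr G * arr X | Xd (ginv (fst p)) (snd p) }.

Definition sdp_dm (p : sdp_arr) : obj G * obj X :=
  (dm (fst (proj1_sig p)), dm (snd (proj1_sig p))).

Definition sdp_cd (p : sdp_arr) : obj G * obj X :=
  (cd (fst (proj1_sig p)), cd (th (fst (proj1_sig p)) (snd (proj1_sig p)))).

(* (g,x)(h,y) = (gh, theta_{h*}(x theta_h(y))) when (g,h) is composable and
   (x, theta_h y) in X^(2); junk value (g,x) otherwise. *)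
Definition sdp_mul (p q : sdp_arr) : sdp_arr :=
  let g := fst (proj1_sig p) in let x := snd (proj1_sig p) in
  let h := fst (proj1_sig q) in let y := snd (proj1_sig q) in
  let z := th (ginv h) (mul x (th h y)) in
  match excluded_middle_informative
          (composable G g h /\ composable X x (th h y) /\ Xd (ginv (mul g h)) z)
  with
  | left H => exist (fun r : arr G * arr X => Xd (ginv (fst r)) (snd r))
                    (mul g h, z) (proj2 (proj2 H))
  | right _ => p
  end.

Definition semidirect : sgd := Sgd sdp_arr (obj G * obj X) sdp_dm sdp_cd sdp_mul.
End Action.

From Stdlib Require Import ProofIrrelevance ClassicalDescription.

(* Write [x <= y] for the natural order of the semilatticeoid [X].  The second
   component of [(g,x)(h,y)] is characterised by its down-set: it is the largest
   [t <= y] with [theta_h t <= x].  Since an element of a semilatticeoid is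
   determined by its down-set and the action is by order isomorphisms between
   order ideals, associativity and the identities [s s* s = s] for
   [(g,x)* = (g^*, theta_g x)] reduce to comparing down-sets.  Uniqueness of the
   inverse comes from uniqueness in the groupoid and antisymmetry of [<=].  For
   [E]-unitarity, an arrow below [(g,x)] has first component [g f = g] for an
   idempotent [f], because the only idempotents of a groupoid are identities;
   hence compatibility with an idempotent forces [g] to be an identity, and
   [theta_g] is then the identity on [X_g]. *)

Section Groupoid.
Context {G : sgd} {ginv : arr G -> arr G}.
Hypothesis HG : groupoid G.
Hypothesis Hinv : forall g, is_inverse G g (ginv g).

Lemma ginv_unique (g h : arr G) : is_inverse G g h -> h = ginv g.
Proof.
  intros Hh. destruct HG as [[_ Huniq] _]. destruct (Huniq g) as [t [_ Ht]].
  transitivity t; [symmetry|]; apply Ht; auto.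
Qed.

Lemma ginvK (g : arr G) : ginv (ginv g) = g.
Proof.
  symmetry. apply ginv_unique.
  destruct (Hinv g) as (Hc1 & Hc2 & H1 & H2). now repeat split.
Qed.

Lemma ginv_idem (g : arr G) : idempotent G g -> ginv g = g.
Proof.
  intros [Hgg Hmul]. symmetry. apply ginv_unique.
  unfold is_inverse. now rewrite !Hmul.
Qed.

(* [f] and [s^* s] are idempotents over [d s]; in a groupoid they coincide. *)
Lemma groupoid_mul_idem (s f : arr G) : idempotent G f -> composable G s f -> mul s f = s.
Proof.
  intros Hf Hsf. destruct HG as [[[Hdc Hassoc] _] Hunit].
  destruct (Hinv s) as (Hc1 & Hc2 & H1 & H2). unfold composable in *.
  destruct (Hdc _ _ Hc2) as [Dss Css].
  assert (Hss : idempotent G (mul (ginv s) s)).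
  { split.
    - unfold composable. rewrite Dss, Css. congruence.
    - rewrite <- (Hassoc _ (ginv s) s); [now rewrite H2| |exact Hc2].
      unfold composable. now rewrite Dss. }
  destruct (Hunit (dm s)) as [e [_ He]].
  assert (Ef : f = mul (ginv s) s).
  { transitivity e; [symmetry|]; apply He.
    - destruct Hf as [Hff Hff2]. unfold composable in Hff. repeat split; congruence.
    - repeat split; [apply Hss | apply Hss | exact Dss | rewrite Css; congruence]. }
  subst f. rewrite <- Hassoc by assumption. exact H1.
Qed.

End Groupoid.

Section Semilatticeoid.
Context {X : sgd}.
Hypothesis HX : semilatticeoid X.

Lemma sl_dm_cd (x : arr X) : dm x = cd x.
Proof. apply (proj2 HX x). Qed.

Lemma sl_mulxx (x : arr X) : mul x x = x.
Proof. apply (proj2 HX x). Qed.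

Lemma sl_dm_mul o (a b : arr X) : dm a = o -> dm b = o -> dm (mul a b) = o.
Proof.
  intros Ha Hb. destruct HX as [[[Hdc _] _] _].
  rewrite (proj1 (Hdc a b ltac:(unfold composable; rewrite <- sl_dm_cd; congruence))).
  exact Hb.
Qed.

Lemma sl_mulA o (a b c : arr X) : dm a = o -> dm b = o -> dm c = o ->
  mul (mul a b) c = mul a (mul b c).
Proof.
  intros Ha Hb Hc. destruct HX as [[[_ Hassoc] _] _].
  apply Hassoc; unfold composable; rewrite <- sl_dm_cd; congruence.
Qed.

Local Ltac on_obj := solve [repeat apply sl_dm_mul; assumption].

(* Both [x y] and [y x] are inverses of the idempotent [x y]. *)
Lemma sl_mulC o (x y : arr X) : dm x = o -> dm y = o -> mul x y = mul y x.
Proof.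
  intros Hx Hy. destruct HX as [[_ Huniq] _].
  assert (Hxy : dm (mul x y) = o) by on_obj.
  assert (Hyx : dm (mul y x) = o) by on_obj.
  destruct (Huniq (mul x y)) as [t [_ Ht]].
  transitivity t; [symmetry|]; apply Ht;
    unfold is_inverse, composable; rewrite <- !sl_dm_cd.
  - rewrite !sl_mulxx. repeat split; reflexivity.
  - repeat split; try congruence.
    + rewrite (sl_mulA o x y (mul y x)), <- (sl_mulA o y y x), sl_mulxx by on_obj.
      rewrite (sl_mulA o x (mul y x) (mul x y)), (sl_mulA o y x (mul x y)) by on_obj.
      rewrite <- (sl_mulA o x x y), sl_mulxx, <- (sl_mulA o x y (mul x y)) by on_obj.
      apply sl_mulxx.
    + rewrite (sl_mulA o y x (mul x y)), <- (sl_mulA o x x y), sl_mulxx by on_obj.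
      rewrite (sl_mulA o y (mul x y) (mul y x)), (sl_mulA o x y (mul y x)) by on_obj.
      rewrite <- (sl_mulA o y y x), sl_mulxx, <- (sl_mulA o y x (mul y x)) by on_obj.
      apply sl_mulxx.
Qed.

Lemma sl_leP (s t : arr X) : nat_le X s t <-> dm s = dm t /\ mul t s = s.
Proof.
  split.
  - intros (Hd & _ & e & _ & Hte & ->). split; [exact Hd|].
    unfold composable in Hte. rewrite <- sl_dm_cd in Hte.
    now rewrite <- (sl_mulA (dm t) t t e), sl_mulxx.
  - intros [Hd Hm]. repeat split; [exact Hd | now rewrite <- !sl_dm_cd |].
    exists s. repeat split; [apply (proj2 HX s) .. | | now rewrite Hm].
    unfold composable. rewrite <- sl_dm_cd. congruence.
Qed.

Lemma sl_le_refl (x : arr X) : nat_le X x x.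
Proof. apply sl_leP. split; [reflexivity | apply sl_mulxx]. Qed.

Lemma sl_le_trans (a b c : arr X) : nat_le X a b -> nat_le X b c -> nat_le X a c.
Proof.
  rewrite !sl_leP. intros [Dab Mab] [Dbc Mbc]. split; [congruence|].
  rewrite <- Mab at 1. now rewrite <- (sl_mulA (dm a) c b a), Mbc by congruence.
Qed.

Lemma sl_le_antisym (a b : arr X) : nat_le X a b -> nat_le X b a -> a = b.
Proof.
  rewrite !sl_leP. intros [Dab Mab] [Dba Mba].
  rewrite <- Mab, (sl_mulC (dm a) b a) by congruence. exact Mba.
Qed.

Lemma sl_eq_of_le_iff (a b : arr X) : (forall t, nat_le X t a <-> nat_le X t b) -> a = b.
Proof.
  intros H. apply sl_le_antisym; [apply H | apply H]; apply sl_le_refl.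
Qed.

Lemma sl_mul_le_l (x y : arr X) : composable X x y -> nat_le X (mul x y) x.
Proof.
  unfold composable. rewrite <- sl_dm_cd. intros Hxy. apply sl_leP.
  split; [apply sl_dm_mul; congruence|].
  now rewrite <- (sl_mulA (dm x) x x y), sl_mulxx by congruence.
Qed.

Lemma sl_mul_le_r (x y : arr X) : composable X x y -> nat_le X (mul x y) y.
Proof.
  intros Hxy. unfold composable in Hxy. rewrite <- sl_dm_cd in Hxy.
  rewrite (sl_mulC (dm x) x y) by congruence.
  apply sl_mul_le_l. unfold composable. rewrite <- sl_dm_cd. congruence.
Qed.

Lemma sl_le_mul (t x y : arr X) : nat_le X t x -> nat_le X t y -> nat_le X t (mul x y).
Proof.
  rewrite !sl_leP. intros [Dx Mx] [Dy My].
  split; [symmetry; apply (sl_dm_mul (dm t)); congruence|].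
  now rewrite (sl_mulA (dm t) x y t), My by congruence.
Qed.

End Semilatticeoid.

Section SemidirectProduct.
Context {G X : sgd} {ginv : arr G -> arr G} {Xd : arr G -> arr X -> Prop}
        {th : arr G -> arr X -> arr X}.
Hypothesis HG : groupoid G.
Hypothesis Hinv : forall g, is_inverse G g (ginv g).
Hypothesis HX : semilatticeoid X.
Hypothesis HA : ordered_partial_action G X ginv Xd th.

Local Notation S := (semidirect G X ginv Xd th).
Local Notation sdp := (sdp_arr G X ginv Xd).
Local Notation smul := (sdp_mul G X ginv Xd th).
Local Notation sdm := (sdp_dm G X ginv Xd).
Local Notation scd := (sdp_cd G X ginv Xd th).
Local Notation grp p := (fst (proj1_sig p)).
Local Notation pt p := (snd (proj1_sig p)).

Lemma th_dom g x : Xd (ginv g) x -> Xd g (th g x).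
Proof. apply HA. Qed.

Lemma th_inj g x y : Xd (ginv g) x -> Xd (ginv g) y -> th g x = th g y -> x = y.
Proof. apply HA. Qed.

Lemma thK g x : Xd (ginv g) x -> th (ginv g) (th g x) = x.
Proof. apply HA. Qed.

Lemma th_mul g h x : composable G g h -> Xd (ginv h) x -> Xd (ginv g) (th h x) ->
  Xd (ginv (mul g h)) x /\ th (mul g h) x = th g (th h x).
Proof. intros. apply HA; assumption. Qed.

Lemma dom_le g x y : nat_le X x y -> Xd g y -> Xd g x.
Proof. apply HA. Qed.

Lemma th_le g x y : Xd (ginv g) x -> Xd (ginv g) y ->
  nat_le X x y <-> nat_le X (th g x) (th g y).
Proof. apply HA. Qed.

Lemma th_dom_inv g x : Xd g x -> Xd (ginv g) (th (ginv g) x).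
Proof. intros Hx. apply th_dom. now rewrite (ginvK HG Hinv). Qed.

Lemma thKV g x : Xd g x -> th g (th (ginv g) x) = x.
Proof.
  intros Hx. rewrite <- (ginvK HG Hinv g) at 1. apply thK.
  now rewrite (ginvK HG Hinv).
Qed.

(* [theta_g (theta_g y) = theta_(g g) y = theta_g y], and [theta_g] is injective. *)
Lemma th_idem g y : idempotent G g -> Xd (ginv g) y -> th g y = y.
Proof.
  intros Hg Hy. pose proof (ginv_idem HG Hinv g Hg) as Eg. destruct Hg as [Hgg Hmul].
  assert (Hy' : Xd (ginv g) (th g y)) by (rewrite Eg; apply th_dom, Hy).
  apply (th_inj g); [exact Hy' | exact Hy |].
  destruct (th_mul g g y Hgg Hy Hy') as [_ Hc]. rewrite Hmul in Hc.
  symmetry. exact Hc.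
Qed.

Lemma dom_mul_th h x y : Xd (ginv h) y -> composable X x (th h y) ->
  Xd h (mul x (th h y)).
Proof. intros Hy Hxy. exact (dom_le _ _ _ (sl_mul_le_r HX _ _ Hxy) (th_dom _ _ Hy)). Qed.

Lemma le_pullback h x y t : Xd (ginv h) y -> composable X x (th h y) ->
  nat_le X t (th (ginv h) (mul x (th h y))) <->
  nat_le X t y /\ nat_le X (th h t) x.
Proof.
  intros Hy Hxy. set (u := mul x (th h y)).
  assert (Hux : nat_le X u x) by exact (sl_mul_le_l HX _ _ Hxy).
  assert (Huy : nat_le X u (th h y)) by exact (sl_mul_le_r HX _ _ Hxy).
  assert (Hu : Xd h u) by exact (dom_mul_th _ _ _ Hy Hxy).
  pose proof (th_dom_inv _ _ Hu) as Hz. pose proof (thKV _ _ Hu) as Hthz.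
  split.
  - intros Ht. pose proof (dom_le _ _ _ Ht Hz) as Htd.
    apply (th_le h _ _ Htd Hz) in Ht. rewrite Hthz in Ht.
    split; [|exact (sl_le_trans HX _ _ _ Ht Hux)].
    apply (th_le h _ _ Htd Hy). exact (sl_le_trans HX _ _ _ Ht Huy).
  - intros [Hty Htx]. pose proof (dom_le _ _ _ Hty Hy) as Htd.
    apply (th_le h _ _ Htd Hz). rewrite Hthz.
    apply (sl_le_mul HX); [exact Htx | apply (th_le h _ _ Htd Hy), Hty].
Qed.

Lemma sdp_eq (p q : sdp) : proj1_sig p = proj1_sig q -> p = q.
Proof. destruct p, q. cbn. intros ->. f_equal. apply proof_irrelevance. Qed.

Lemma sdp_composableP (p q : sdp) : composable S p q <->
  composable G (grp p) (grp q) /\ composable X (pt p) (th (grp q) (pt q)).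
Proof.
  unfold composable; cbn; unfold sdp_dm, sdp_cd. split.
  - intros H. now injection H.
  - now intros [-> ->].
Qed.

Lemma sdp_mulE (p q : sdp) : composable S p q ->
  proj1_sig (smul p q) =
  (mul (grp p) (grp q), th (ginv (grp q)) (mul (pt p) (th (grp q) (pt q)))).
Proof.
  rewrite sdp_composableP. destruct p as [[g x] Hx], q as [[h y] Hy]; cbn in *.
  intros [Hgh Hxy]. unfold sdp_mul; cbn.
  destruct (excluded_middle_informative _) as [Hok | Hfail]; [reflexivity|].
  exfalso. apply Hfail. split; [exact Hgh | split; [exact Hxy|]].
  pose proof (dom_mul_th _ _ _ Hy Hxy) as Hu.
  apply th_mul; [exact Hgh | apply th_dom_inv, Hu |].
  rewrite (thKV _ _ Hu). exact (dom_le _ _ _ (sl_mul_le_l HX _ _ Hxy) Hx).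
Qed.

Lemma sdp_grp_mul (p q : sdp) : composable S p q -> grp (smul p q) = mul (grp p) (grp q).
Proof. intros Hpq. now rewrite (sdp_mulE p q Hpq). Qed.

Lemma sdp_le_pt_mul (p q : sdp) t : composable S p q ->
  nat_le X t (pt (smul p q)) <-> nat_le X t (pt q) /\ nat_le X (th (grp q) t) (pt p).
Proof.
  intros Hpq. rewrite (sdp_mulE p q Hpq); cbn.
  apply le_pullback; [exact (proj2_sig q) | apply sdp_composableP, Hpq].
Qed.

Lemma sdp_ext (p q : sdp) : grp p = grp q ->
  (forall t, nat_le X t (pt p) <-> nat_le X t (pt q)) -> p = q.
Proof.
  intros Hg Ht. apply sdp_eq, injective_projections; [exact Hg|].
  apply (sl_eq_of_le_iff HX), Ht.
Qed.

Lemma sdp_mul_dm_cd (p q : sdp) : composable S p q ->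
  sdm (smul p q) = sdm q /\ scd (smul p q) = scd p.
Proof.
  intros Hpq. pose proof (sdp_mulE p q Hpq) as E. unfold sdp_dm, sdp_cd. rewrite E.
  apply sdp_composableP in Hpq. destruct HG as [[[Hdc _] _] _].
  destruct p as [[g x] Hx], q as [[h y] Hy]; cbn in *. destruct Hpq as [Hgh Hxy].
  destruct (Hdc _ _ Hgh) as [-> ->].
  pose proof (dom_mul_th _ _ _ Hy Hxy) as Hu.
  pose proof (th_dom_inv _ _ Hu) as Hz.
  destruct (proj1 (le_pullback h x y _ Hy Hxy) (sl_le_refl HX _)) as [Hzy _].
  pose proof (dom_le _ _ _ (sl_mul_le_l HX _ _ Hxy) Hx) as Hug.
  destruct (th_mul g h _ Hgh Hz) as [_ ->]; [now rewrite (thKV _ _ Hu)|].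
  rewrite (thKV _ _ Hu).
  assert (Hle : nat_le X (th g (mul x (th h y))) (th g x)).
  { apply th_le; [exact Hug | exact Hx | exact (sl_mul_le_l HX _ _ Hxy)]. }
  now rewrite (proj1 Hzy), (proj1 (proj2 Hle)).
Qed.

Lemma sdp_composable_mul_l (p q r : sdp) :
  composable S p q -> composable S q r -> composable S (smul p q) r.
Proof.
  intros Hpq Hqr. unfold composable; cbn [dm semidirect].
  now rewrite (proj1 (sdp_mul_dm_cd p q Hpq)).
Qed.

Lemma sdp_composable_mul_r (p q r : sdp) :
  composable S p q -> composable S q r -> composable S p (smul q r).
Proof.
  intros Hpq Hqr. unfold composable; cbn [cd semidirect].
  now rewrite (proj2 (sdp_mul_dm_cd q r Hqr)).
Qed.

Lemma sdp_mulA (p q r : sdp) : composable S p q -> composable S q r ->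
  smul (smul p q) r = smul p (smul q r).
Proof.
  intros Hpq Hqr.
  pose proof (sdp_composable_mul_l p q r Hpq Hqr) as Hpq_r.
  pose proof (sdp_composable_mul_r p q r Hpq Hqr) as Hp_qr.
  pose proof (proj1 (sdp_composableP q r) Hqr) as [Hhk _].
  apply sdp_ext.
  - rewrite !sdp_grp_mul by assumption. destruct HG as [[[_ Hassoc] _] _].
    apply Hassoc; [apply (sdp_composableP p q), Hpq | exact Hhk].
  - intros t.
    rewrite (sdp_le_pt_mul _ _ t Hpq_r), (sdp_le_pt_mul _ _ _ Hpq),
      (sdp_le_pt_mul _ _ t Hp_qr), (sdp_le_pt_mul _ _ t Hqr), (sdp_grp_mul _ _ Hqr).
    assert (Hth : nat_le X t (pt r) -> nat_le X (th (grp r) t) (pt q) ->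
                  th (mul (grp q) (grp r)) t = th (grp q) (th (grp r) t)).
    { intros Htr Htq. apply th_mul; [exact Hhk | |].
      - exact (dom_le _ _ _ Htr (proj2_sig r)).
      - exact (dom_le _ _ _ Htq (proj2_sig q)). }
    split.
    + intros (Htr & Htq & Htp). rewrite Hth by assumption. tauto.
    + intros ((Htr & Htq) & Htp). rewrite Hth in Htp by assumption. tauto.
Qed.

Lemma sdp_inv_dom (p : sdp) : Xd (ginv (ginv (grp p))) (th (grp p) (pt p)).
Proof. rewrite (ginvK HG Hinv). apply th_dom, (proj2_sig p). Qed.

Definition sdp_inv (p : sdp) : sdp :=
  exist _ (ginv (grp p), th (grp p) (pt p)) (sdp_inv_dom p).

Lemma sdp_invK (p : sdp) : sdp_inv (sdp_inv p) = p.
Proof.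
  apply sdp_eq. destruct p as [[g x] Hx]; cbn.
  now rewrite (ginvK HG Hinv), (thK g x Hx).
Qed.

Lemma sdp_composable_inv (p : sdp) : composable S p (sdp_inv p).
Proof.
  apply sdp_composableP. destruct p as [[g x] Hx]; cbn.
  split; [exact (proj1 (Hinv g)) |].
  unfold composable. rewrite (thK g x Hx). apply (sl_dm_cd HX).
Qed.

Lemma sdp_composable_inv_l (p : sdp) : composable S (sdp_inv p) p.
Proof. rewrite <- (sdp_invK p) at 2. apply sdp_composable_inv. Qed.

Lemma sdp_mul_inv_mul (p : sdp) : smul (smul p (sdp_inv p)) p = p.
Proof.
  pose proof (sdp_composable_inv p) as H1. pose proof (sdp_composable_inv_l p) as H2.
  pose proof (sdp_composable_mul_l _ _ _ H1 H2) as H12.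
  apply sdp_ext.
  - rewrite !sdp_grp_mul by assumption. apply (Hinv (grp p)).
  - intros t. rewrite (sdp_le_pt_mul _ _ t H12), (sdp_le_pt_mul _ _ _ H1).
    destruct p as [[g x] Hx]; cbn in *. split; [tauto|]. intros Htx.
    pose proof (dom_le _ _ _ Htx Hx) as Ht. rewrite (thK g t Ht).
    split; [exact Htx | split; [apply (th_le g _ _ Ht Hx), Htx | exact Htx]].
Qed.

Lemma sdp_inv_unique (p q : sdp) : is_inverse S p q -> q = sdp_inv p.
Proof.
  intros (Hpq & Hqp & Hpqp & Hqpq). cbn [mul semidirect] in Hpqp, Hqpq.
  pose proof (sdp_composable_mul_l _ _ _ Hpq Hqp) as Hpq_p.
  pose proof (sdp_composable_mul_l _ _ _ Hqp Hpq) as Hqp_q.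
  assert (Hg : grp q = ginv (grp p)).
  { apply (ginv_unique HG Hinv). repeat split.
    - apply (sdp_composableP p q), Hpq.
    - apply (sdp_composableP q p), Hqp.
    - now rewrite <- (sdp_grp_mul _ _ Hpq), <- (sdp_grp_mul _ _ Hpq_p), Hpqp.
    - now rewrite <- (sdp_grp_mul _ _ Hqp), <- (sdp_grp_mul _ _ Hqp_q), Hqpq. }
  assert (Hxy : nat_le X (th (grp p) (pt p)) (pt q)).
  { pose proof (sdp_le_pt_mul _ _ (pt p) Hpq_p) as H. rewrite Hpqp in H.
    destruct (proj1 H (sl_le_refl HX _)) as [_ H'].
    exact (proj1 (proj1 (sdp_le_pt_mul _ _ _ Hpq) H')). }
  assert (Hyx : nat_le X (th (grp q) (pt q)) (pt p)).
  { pose proof (sdp_le_pt_mul _ _ (pt q) Hqp_q) as H. rewrite Hqpq in H.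
    destruct (proj1 H (sl_le_refl HX _)) as [_ H'].
    exact (proj1 (proj1 (sdp_le_pt_mul _ _ _ Hqp) H')). }
  apply sdp_ext; [exact Hg|]. intros t. cbn.
  destruct p as [[g x] Hx], q as [[h y] Hy]; cbn in *. subst h.
  assert (Hy' : Xd g y) by (rewrite <- (ginvK HG Hinv g); exact Hy).
  enough (Ey : y = th g x) by (rewrite Ey; reflexivity).
  apply (sl_le_antisym HX); [| exact Hxy].
  rewrite <- (thKV g y Hy'). apply (th_le g _ x (th_dom_inv _ _ Hy') Hx), Hyx.
Qed.

Lemma sdp_idempotent_grp (p : sdp) : idempotent S p -> idempotent G (grp p).
Proof.
  intros [Hpp Hmul]. cbn [mul semidirect] in Hmul.
  split; [apply (sdp_composableP p p), Hpp|].
  now rewrite <- (sdp_grp_mul _ _ Hpp), Hmul.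
Qed.

Lemma sdp_idempotent_of_grp (p : sdp) : idempotent G (grp p) -> idempotent S p.
Proof.
  intros Hg. pose proof (th_idem _ _ Hg (proj2_sig p)) as Hfix.
  assert (Hpp : composable S p p).
  { apply sdp_composableP. split; [apply Hg|]. rewrite Hfix. apply (sl_dm_cd HX). }
  split; [exact Hpp|]. cbn [mul semidirect]. apply sdp_ext.
  - rewrite (sdp_grp_mul _ _ Hpp). apply Hg.
  - intros t. rewrite (sdp_le_pt_mul _ _ t Hpp). split; [tauto|]. intros Ht.
    rewrite (th_idem _ _ Hg (dom_le _ _ _ Ht (proj2_sig p))). tauto.
Qed.

Lemma sdp_le_grp (r s : sdp) : nat_le S r s -> grp r = grp s.
Proof.
  intros (_ & _ & f & Hf & Hsf & ->). cbn [mul semidirect].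
  rewrite (sdp_grp_mul _ _ Hsf). apply (groupoid_mul_idem HG Hinv).
  - apply sdp_idempotent_grp, Hf.
  - apply (sdp_composableP s f), Hsf.
Qed.

Lemma sdp_inverse_semigroupoid : inverse_semigroupoid S.
Proof.
  split; [split; [exact sdp_mul_dm_cd | exact sdp_mulA]|].
  intros p. exists (sdp_inv p). split.
  - pose proof (sdp_mul_inv_mul (sdp_inv p)) as Hinv_p. rewrite sdp_invK in Hinv_p.
    repeat split; [apply sdp_composable_inv | apply sdp_composable_inv_l
                  | apply sdp_mul_inv_mul | exact Hinv_p].
  - intros q Hq. symmetry. apply sdp_inv_unique, Hq.
Qed.

Lemma sdp_E_unitary : E_unitary S.
Proof.
  intros s e [r [Hrs Hre]] He. apply sdp_idempotent_of_grp.
  rewrite <- (sdp_le_grp _ _ Hrs), (sdp_le_grp _ _ Hre). apply sdp_idempotent_grp, He.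
Qed.

End SemidirectProduct.

Theorem mainTheorem11 (G X : sgd) (ginv : arr G -> arr G)
  (Xd : arr G -> arr X -> Prop) (th : arr G -> arr X -> arr X) :
  groupoid G ->
  (forall g, is_inverse G g (ginv g)) ->
  semilatticeoid X ->
  ordered_partial_action G X ginv Xd th ->
  inverse_semigroupoid (semidirect G X ginv Xd th) /\
  E_unitary (semidirect G X ginv Xd th).
Proof.
  intros HG Hinv HX HA.
  exact (conj (sdp_inverse_semigroupoid HG Hinv HX HA) (sdp_E_unitary HG Hinv HX HA)).
Qed.
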